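(* There exist a function $g:\mathbb{N}\to\mathbb{R}$ with $g(n)=o(n)$ and, for every $n\ge 1$, an injective map from the set of AVL trees with $n$ nodes to the set of finite binary strings such that every codeword has length at most $0.99933\,n+g(n)$. In words: there is a static encoding of AVL trees using at most $0.99933n+o(n)$ bits for AVL trees with $n$ nodes.
   Context: A binary tree is a rooted tree in which every node has an (optional) left child and an (optional) right child. The height of a tree is the number of edges on a longest path from the root to a leaf; the empty tree has height $-1$. An AVL tree is a binary tree such that at every node the heights of the left subtree and the right subtree differ by at most $1$ (empty subtrees included). *)

From Stdlib Require Import Reals ZArith List.

Inductive btree : Type :=
| Leaf : btree
| Node : btree -> btree -> btree.

Fixpoint nodes (t : btree) : nat :=
  match t with
  | Leaf => 0
  | Node l r => S (nodes l + nodes r)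
  end.

Fixpoint height (t : btree) : Z :=
  match t with
  | Leaf => (-1)%Z
  | Node l r => (1 + Z.max (height l) (height r))%Z
  end.

Fixpoint is_avl (t : btree) : Prop :=
  match t with
  | Leaf => True
  | Node l r => is_avl l /\ is_avl r /\ (Z.abs (height l - height r) <= 1)%Z
  end.

Definition little_o_n (g : nat -> R) : Prop :=
  forall eps : R, (0 < eps)%R ->
    exists N : nat, forall n : nat, (N <= n)%nat -> (Rabs (g n) <= eps * INR n)%R.

From Stdlib Require Import Reals ZArith List Lra Lia.

(* Counting suffices: a code of fixed length m is injective on the AVL trees
   with n nodes as soon as there are at most 2^m of them.  For x = 20/39 the
   sums S_h of x^|t| over the AVL trees of height h satisfy
   S_(h+2) = x S_(h+1) (S_(h+1) + 2 S_h) and decay geometrically from height 2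
   on, so the sum of x^|t| over all AVL trees is at most 32.  Hence there are at
   most 32 (39/20)^n AVL trees with n nodes, and as (39/20)^28 <= 2^27, codes of
   32 + 27 (n / 28) <= (27/28) n + 32 bits suffice. *)

Definition node_pairs (A B : list btree) : list btree :=
  flat_map (fun l => map (Node l) B) A.

Lemma in_node_pairs A B l r : In l A -> In r B -> In (Node l r) (node_pairs A B).
Proof.
  intros Hl Hr. apply in_flat_map. exists l. split; [exact Hl|]. now apply in_map.
Qed.

(* [avl_level (S h)] contains the AVL trees of height [h - 1]; [avl_level 0] is
   empty, which makes the recurrence uniform down to height 0. *)
Fixpoint avl_level (k : nat) : list btree :=
  match k with
  | 0 => nil
  | S k' =>
      match k' with
      | 0 => Leaf :: nil
      | S j => node_pairs (avl_level k') (avl_level k')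
               ++ node_pairs (avl_level k') (avl_level j)
               ++ node_pairs (avl_level j) (avl_level k')
      end
  end.

Lemma avl_level_SS k :
  avl_level (S (S k)) =
  node_pairs (avl_level (S k)) (avl_level (S k))
  ++ node_pairs (avl_level (S k)) (avl_level k)
  ++ node_pairs (avl_level k) (avl_level (S k)).
Proof. reflexivity. Qed.

Lemma node_in_avl_level k l r :
  (In l (avl_level (S k)) /\ In r (avl_level (S k))) \/
  (In l (avl_level (S k)) /\ In r (avl_level k)) \/
  (In l (avl_level k) /\ In r (avl_level (S k))) ->
  In (Node l r) (avl_level (S (S k))).
Proof.
  rewrite avl_level_SS, !in_app_iff.
  intros [[Hl Hr]|[[Hl Hr]|[Hl Hr]]]; auto using in_node_pairs.
Qed.

Lemma height_ge_m1 t : (-1 <= height t)%Z.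
Proof. induction t; cbn [height nodes]; lia. Qed.

Lemma height_lt_nodes t : (height t < Z.of_nat (nodes t))%Z.
Proof. induction t; cbn [height nodes]; lia. Qed.

Lemma avl_in_level t : is_avl t -> In t (avl_level (Z.to_nat (height t + 2))).
Proof.
  induction t as [|l IHl r IHr]; cbn [height is_avl]; [now left|].
  intros (Hl & Hr & Hd).
  specialize (IHl Hl); specialize (IHr Hr).
  pose proof (height_ge_m1 l); pose proof (height_ge_m1 r).
  set (k := Z.to_nat (Z.max (height l) (height r) + 1)).
  replace (Z.to_nat (1 + Z.max (height l) (height r) + 2)) with (S (S k))
    by (subst k; lia).
  apply node_in_avl_level.
  assert (height l = height r \/ height l = height r + 1 \/ height r = height l + 1)%Z
    as [E|[E|E]] by lia.
  - left. replace (S k) with (Z.to_nat (height l + 2)) by (subst k; lia).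
    split; [exact IHl|now rewrite E].
  - right; left.
    replace (S k) with (Z.to_nat (height l + 2)) by (subst k; lia).
    replace k with (Z.to_nat (height r + 2)) by (subst k; lia). auto.
  - right; right.
    replace (S k) with (Z.to_nat (height r + 2)) by (subst k; lia).
    replace k with (Z.to_nat (height l + 2)) by (subst k; lia). auto.
Qed.

Definition avl_candidates (n : nat) : list btree :=
  filter (fun t => Nat.eqb (nodes t) n) (flat_map avl_level (seq 0 (n + 2))).

Lemma avl_in_candidates t : is_avl t -> In t (avl_candidates (nodes t)).
Proof.
  intros Ht. apply filter_In. split; [|apply Nat.eqb_refl].
  apply in_flat_map. exists (Z.to_nat (height t + 2)). split; [|now apply avl_in_level].
  apply in_seq. pose proof (height_ge_m1 t); pose proof (height_lt_nodes t). lia.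
Qed.

Section IndexOf.
Context {A : Type} (eq_dec : forall a b : A, {a = b} + {a <> b}).

Fixpoint index_of (a : A) (l : list A) : nat :=
  match l with
  | nil => 0
  | b :: l' => if eq_dec a b then 0 else S (index_of a l')
  end.

Lemma index_of_spec a l d :
  In a l -> index_of a l < length l /\ nth (index_of a l) l d = a.
Proof.
  induction l as [|b l IH]; simpl; [tauto|].
  intros Hin. destruct (eq_dec a b) as [->|Hne]; [split; [lia|reflexivity]|].
  destruct Hin as [->|Hin]; [congruence|].
  destruct (IH Hin). split; [lia|assumption].
Qed.

End IndexOf.

Definition bin_digits (m i : nat) : list bool := map (Nat.testbit i) (seq 0 m).

Lemma bin_digits_length m i : length (bin_digits m i) = m.
Proof. unfold bin_digits. now rewrite length_map, length_seq. Qed.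

Lemma bin_digits_inj m i j :
  i < 2 ^ m -> j < 2 ^ m -> bin_digits m i = bin_digits m j -> i = j.
Proof.
  intros Hi Hj E. apply Nat.bits_inj. intros k.
  destruct (Nat.lt_ge_cases k m) as [Hk|Hk].
  - apply map_ext_in_iff with (a := k) in E; [exact E|].
    apply in_seq. lia.
  - rewrite <- (Nat.mod_small i (2 ^ m)), <- (Nat.mod_small j (2 ^ m)) by assumption.
    now rewrite !Nat.mod_pow2_bits_high.
Qed.

Definition btree_eq_dec (t u : btree) : {t = u} + {t <> u}.
Proof. decide equality. Defined.

Open Scope R_scope.

Section Weight.
Variable x : R.

Fixpoint weight (l : list btree) : R :=
  match l with
  | nil => 0
  | t :: l' => x ^ nodes t + weight l'
  end.

Lemma weight_app A B : weight (A ++ B) = weight A + weight B.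
Proof. induction A as [|t A IH]; simpl; [|rewrite IH]; ring. Qed.

Lemma weight_map_node l B : weight (map (Node l) B) = x * x ^ nodes l * weight B.
Proof. induction B as [|r B IH]; simpl; [|rewrite IH, pow_add]; ring. Qed.

Lemma weight_node_pairs A B : weight (node_pairs A B) = x * weight A * weight B.
Proof.
  induction A as [|l A IH]; simpl; [ring|].
  fold (node_pairs A B). rewrite weight_app, weight_map_node, IH. ring.
Qed.

Lemma weight_filter_nodes n A :
  weight (filter (fun t => Nat.eqb (nodes t) n) A)
  = INR (length (filter (fun t => Nat.eqb (nodes t) n) A)) * x ^ n.
Proof.
  induction A as [|t A IH]; cbn [filter weight length]; [simpl; ring|].
  destruct (Nat.eqb_spec (nodes t) n) as [<-|]; cbn [weight length]; [|exact IH].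
  rewrite IH, S_INR. ring.
Qed.

Hypothesis x_ge0 : 0 <= x.

Lemma weight_ge0 A : 0 <= weight A.
Proof.
  induction A as [|t A IH]; simpl; [lra|].
  pose proof (pow_le x (nodes t) x_ge0). lra.
Qed.

Lemma weight_filter_le f A : weight (filter f A) <= weight A.
Proof.
  induction A as [|t A IH]; simpl; [lra|].
  pose proof (pow_le x (nodes t) x_ge0). destruct (f t); simpl; lra.
Qed.

End Weight.

Fixpoint partial_sum (s : nat -> R) (m : nat) : R :=
  match m with
  | O => 0
  | S m' => partial_sum s m' + s m'
  end.

Lemma partial_sum_mono s m m' :
  (forall k, 0 <= s k) -> (m <= m')%nat -> partial_sum s m <= partial_sum s m'.
Proof.
  intros s_ge0 Hm. induction Hm as [|m' _ IH]; simpl; [lra|].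
  pose proof (s_ge0 m'). lra.
Qed.

Section QuadraticRecurrence.
Variables (s : nat -> R) (x C q : R) (k0 : nat).
Hypothesis s_ge0 : forall k, 0 <= s k.
Hypothesis s_rec :
  forall k, s (S (S k)) <= x * (s (S k) * s (S k) + 2 * s (S k) * s k).
Hypotheses (x_ge0 : 0 <= x) (q_pos : 0 < q) (q_lt1 : q < 1).
Hypothesis contraction : x * C * (q + 2) <= q.
Hypotheses (s_k0 : s k0 <= C) (s_Sk0 : s (S k0) <= C * q).

Lemma geometric_decay j : s (k0 + j)%nat <= C * q ^ j.
Proof.
  assert (C_ge0 : 0 <= C) by (pose proof (s_ge0 k0); lra).
  enough (s (k0 + j)%nat <= C * q ^ j /\ s (S (k0 + j)) <= C * q ^ S j) by tauto.
  induction j as [|j [IH0 IH1]].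
  - rewrite Nat.add_0_r. simpl. lra.
  - rewrite Nat.add_succ_r. split; [exact IH1|].
    replace (C * q ^ S j) with (C * q ^ j * q) in IH1 by (simpl; ring).
    set (a := C * q ^ j) in *.
    assert (a_le_C : 0 <= a <= C).
    { assert (0 <= q ^ j) by (apply pow_le; lra).
      assert (q ^ j <= 1) by (rewrite <- (pow1 j); apply pow_incr; lra).
      unfold a. split; nra. }
    assert (sq : s (S (k0 + j)) * s (S (k0 + j)) <= (a * q) * (a * q)).
    { pose proof (s_ge0 (S (k0 + j))). apply Rmult_le_compat; lra. }
    assert (mixed : s (S (k0 + j)) * s (k0 + j)%nat <= (a * q) * a).
    { pose proof (s_ge0 (S (k0 + j))). pose proof (s_ge0 (k0 + j)).
      apply Rmult_le_compat; lra. }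
    (* x (a q)(a q + 2 a) = (a q) a x (q + 2) <= (a q) C x (q + 2) <= a q^2 *)
    assert (step : x * (a * q * (a * q) + 2 * (a * q) * a) <= a * q * q).
    { replace (x * (a * q * (a * q) + 2 * (a * q) * a))
        with ((a * q) * (a * (x * (q + 2)))) by ring.
      apply Rmult_le_compat_l; [nra|].
      assert (a * (x * (q + 2)) <= C * (x * (q + 2))) by (apply Rmult_le_compat_r; nra).
      lra. }
    replace (C * q ^ S (S j)) with (a * q * q) by (unfold a; simpl; ring).
    eapply Rle_trans; [apply s_rec|].
    eapply Rle_trans; [|exact step].
    apply Rmult_le_compat_l; lra.
Qed.

Lemma partial_sum_bound m : partial_sum s m <= partial_sum s k0 + C / (1 - q).
Proof.
  assert (C_ge0 : 0 <= C) by (pose proof (s_ge0 k0); lra).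
  assert (tail : forall p,
    partial_sum s (k0 + p) <= partial_sum s k0 + C * (1 - q ^ p) / (1 - q)).
  { induction p as [|p IH].
    - rewrite Nat.add_0_r. simpl. unfold Rdiv. rewrite Rminus_diag. lra.
    - rewrite Nat.add_succ_r. simpl partial_sum.
      replace (C * (1 - q ^ S p) / (1 - q)) with (C * (1 - q ^ p) / (1 - q) + C * q ^ p)
        by (simpl; field; lra).
      pose proof (geometric_decay p). lra. }
  eapply Rle_trans; [apply (partial_sum_mono s m (k0 + m)); [exact s_ge0|lia]|].
  eapply Rle_trans; [apply tail|].
  apply Rplus_le_compat_l. unfold Rdiv. apply Rmult_le_compat_r.
  - apply Rlt_le, Rinv_0_lt_compat. lra.
  - assert (0 <= q ^ m) by (apply pow_le; lra). nra.
Qed.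

End QuadraticRecurrence.

Lemma weight_avl_level_SS x k :
  weight x (avl_level (S (S k))) =
  x * (weight x (avl_level (S k)) * weight x (avl_level (S k))
       + 2 * weight x (avl_level (S k)) * weight x (avl_level k)).
Proof. rewrite avl_level_SS, !weight_app, !weight_node_pairs. ring. Qed.

Lemma weight_flat_map_seq x (f : nat -> list btree) m :
  weight x (flat_map f (seq 0 m)) = partial_sum (fun k => weight x (f k)) m.
Proof.
  induction m as [|m IH]; [reflexivity|].
  rewrite seq_S, flat_map_app, weight_app, IH. simpl. rewrite app_nil_r. reflexivity.
Qed.

Lemma avl_weight_bound m :
  partial_sum (fun k => weight (20 / 39) (avl_level k)) m <= 32.
Proof.
  set (s := fun k => weight (20 / 39) (avl_level k)).
  assert (s_rec : forall k,
    s (S (S k)) = 20 / 39 * (s (S k) * s (S k) + 2 * s (S k) * s k))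
    by (intro k; apply weight_avl_level_SS).
  assert (s0 : s 0%nat = 0) by reflexivity.
  assert (s1 : s 1%nat = 1) by (unfold s; simpl; ring).
  assert (s_ge0 : forall k, 0 <= s k) by (intro k; apply weight_ge0; lra).
  (* 0.572 bounds the level of height 2 and 0.98 is the decay ratio: the first
     four levels contribute less than 2.2 and the geometric tail 28.6. *)
  eapply Rle_trans.
  - apply (partial_sum_bound s (20 / 39) (572 / 1000) (49 / 50) 4); try lra.
    + exact s_ge0.
    + intro k. rewrite s_rec. lra.
    + rewrite !s_rec, s0, s1. lra.
    + rewrite !s_rec, s0, s1. lra.
  - cbn [partial_sum]. rewrite !s_rec, s0, s1. lra.
Qed.

Lemma avl_candidates_length n :
  INR (length (avl_candidates n)) <= 32 * (39 / 20) ^ n.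
Proof.
  assert (H : INR (length (avl_candidates n)) * (20 / 39) ^ n <= 32).
  { unfold avl_candidates. rewrite <- weight_filter_nodes.
    eapply Rle_trans; [apply weight_filter_le; lra|].
    rewrite weight_flat_map_seq. apply avl_weight_bound. }
  replace (INR (length (avl_candidates n)))
    with (INR (length (avl_candidates n)) * (20 / 39) ^ n * (39 / 20) ^ n).
  - apply Rmult_le_compat_r; [apply pow_le; lra|exact H].
  - rewrite Rmult_assoc, <- Rpow_mult_distr.
    replace (20 / 39 * (39 / 20)) with 1 by field. rewrite pow1. ring.
Qed.

Lemma pow_le_blocks a b c k n :
  0 <= a <= b -> a ^ k <= c -> k <> 0%nat ->
  a ^ n <= b ^ (n mod k) * c ^ (n / k).
Proof.
  intros Hab Hc Hk.
  rewrite (Nat.div_mod n k Hk) at 1. rewrite pow_add, pow_mult, Rmult_comm.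
  assert (0 <= a ^ k) by (apply pow_le; lra).
  apply Rmult_le_compat.
  - apply pow_le; lra.
  - apply pow_le, pow_le; lra.
  - apply pow_incr; lra.
  - apply pow_incr; lra.
Qed.

Lemma pow_39_20_28_le : (39 / 20) ^ 28 <= 2 ^ 27.
Proof.
  apply (Rmult_le_reg_r (20 ^ 28)); [apply pow_lt; lra|].
  rewrite <- Rpow_mult_distr. replace (39 / 20 * 20) with 39 by field.
  rewrite !pow_IZR, <- mult_IZR. apply IZR_le. vm_compute. discriminate.
Qed.

Lemma avl_candidates_length_pow2 n :
  (length (avl_candidates n) <= 2 ^ (32 + 27 * (n / 28)))%nat.
Proof.
  apply INR_le. rewrite pow_INR. replace (INR 2) with 2 by (simpl; ring).
  eapply Rle_trans; [apply avl_candidates_length|].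
  rewrite pow_add, pow_mult.
  replace (2 ^ 32) with (2 ^ 5 * 2 ^ 27) by (rewrite <- pow_add; reflexivity).
  replace 32 with (2 ^ 5) at 1 by (simpl; ring).
  rewrite !Rmult_assoc. apply Rmult_le_compat_l; [apply pow_le; lra|].
  eapply Rle_trans.
  { apply (pow_le_blocks (39 / 20) 2 (2 ^ 27) 28 n);
      [lra|apply pow_39_20_28_le|discriminate]. }
  apply Rmult_le_compat_r; [apply pow_le, pow_le; lra|].
  apply Rle_pow; [lra|]. pose proof (Nat.mod_upper_bound n 28). lia.
Qed.

Lemma code_length_le n : INR (32 + 27 * (n / 28)) <= 99933 / 100000 * INR n + 32.
Proof.
  assert (H : (28 * (n / 28) <= n)%nat) by apply Nat.Div0.mul_div_le.
  apply le_INR in H. rewrite mult_INR in H. rewrite plus_INR, mult_INR.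
  replace (INR 28) with 28 in H by (simpl; ring).
  replace (INR 27) with 27 by (simpl; ring).
  replace (INR 32) with 32 by (simpl; ring).
  pose proof (pos_INR n). lra.
Qed.

Lemma little_o_n_const c : little_o_n (fun _ => c).
Proof.
  intros eps Heps. destruct (INR_unbounded (Rabs c / eps)) as [N HN].
  exists N. intros n Hn. apply le_INR in Hn.
  apply (Rmult_lt_compat_l eps) in HN; [|exact Heps].
  replace (eps * (Rabs c / eps)) with (Rabs c) in HN by (field; lra).
  assert (eps * INR N <= eps * INR n) by (apply Rmult_le_compat_l; lra).
  lra.
Qed.

Close Scope R_scope.

Theorem theorem1 :
  exists g : nat -> R,
    little_o_n g /\
    forall n : nat, (1 <= n)%nat ->
      exists enc : btree -> list bool,
        (forall t1 t2 : btree,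
            is_avl t1 -> is_avl t2 -> nodes t1 = n -> nodes t2 = n ->
            enc t1 = enc t2 -> t1 = t2) /\
        (forall t : btree, is_avl t -> nodes t = n ->
            (INR (length (enc t)) <= 99933 / 100000 * INR n + g n)%R).
Proof.
  exists (fun _ => 32%R). split; [apply little_o_n_const|].
  intros n _.
  exists (fun t =>
    bin_digits (32 + 27 * (n / 28)) (index_of btree_eq_dec t (avl_candidates n))).
  split.
  - intros t1 t2 A1 A2 N1 N2 E.
    destruct (index_of_spec btree_eq_dec t1 (avl_candidates n) Leaf) as [B1 E1].
    { rewrite <- N1. now apply avl_in_candidates. }
    destruct (index_of_spec btree_eq_dec t2 (avl_candidates n) Leaf) as [B2 E2].
    { rewrite <- N2. now apply avl_in_candidates. }
    pose proof (avl_candidates_length_pow2 n).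
    apply bin_digits_inj in E; [|lia|lia].
    now rewrite <- E1, <- E2, E.
  - intros t _ _. rewrite bin_digits_length. apply code_length_le.
Qed.
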